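(* Let $\widetilde L$ be a standardized Laplacian matrix of order $n$ and $P=\widetilde L+J$. Then both $\widetilde L$ and $P$ are semiconvergent, i.e., the limits $\lim_{k\to\infty}\widetilde L^k$ and $\lim_{k\to\infty}P^k$ exist.
   Context: A standardized Laplacian matrix of order $n$ is a real $n\times n$ matrix whose row sums are all $0$ and whose off-diagonal entries are nonpositive with absolute value at most $1/n$. $J$ is the $n\times n$ matrix with all entries $1/n$. *)

(* real matrices of order n are represented as functions
   nat -> nat -> R, only entries with indices < n being relevant. *)
From Stdlib Require Import Reals.
Open Scope R_scope.

Fixpoint rsum (n : nat) (f : nat -> R) : R :=
  match n with
  | O => 0
  | S m => rsum m f + f m
  end.

Definition mat := nat -> nat -> R.

Definition mat_mul (n : nat) (A B : mat) : mat :=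
  fun i j => rsum n (fun k => A i k * B k j).

Definition mat_id : mat := fun i j => if Nat.eqb i j then 1 else 0.

Definition mat_add (A B : mat) : mat := fun i j => A i j + B i j.

Fixpoint mat_pow (n : nat) (A : mat) (k : nat) : mat :=
  match k with
  | O => mat_id
  | S k' => mat_mul n (mat_pow n A k') A
  end.

Definition Jmat (n : nat) : mat := fun _ _ => / INR n.

Definition standardized_laplacian (n : nat) (L : mat) : Prop :=
  (forall i, (i < n)%nat -> rsum n (fun j => L i j) = 0) /\
  (forall i j, (i < n)%nat -> (j < n)%nat -> i <> j ->
      L i j <= 0 /\ Rabs (L i j) <= / INR n).

Definition semiconvergent (n : nat) (A : mat) : Prop :=
  forall i j, (i < n)%nat -> (j < n)%nat ->
    exists l : R, Un_cv (fun k => mat_pow n A k i j) l.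

(* P = L + J is row-stochastic with a positive diagonal: its off-diagonal
   entries L_ij + 1/n lie in [0, 1/n], its diagonal entries are at least 1/n,
   and its rows sum to 1.  The core of the file is the classical fact that the
   powers of any such lazy stochastic matrix converge entrywise
   ([lazy_stochastic_semiconvergent]).  The argument uses reachability
   (some power of P has a positive (i, l) entry) and a single pair M, d > 0
   with d <= (P^M)_al at every reachable pair ([uniform_reach]):
   - if every state reachable from i leads back to i, the values (P^k)_aj over
     the class of i lie in a band that shrinks by the factor 1 - d every M
     steps, since every row of P^M in the class gives weight >= d to i;
   - otherwise some state reachable from i cannot return; by induction on the
     number of reachable states the states outside the class already
     converge, and since mass >= d leaves the class every M steps the
     increments of (P^k)_ij contract, so the sequence is Cauchy.
   Finally L has zero row sums, hence L J = 0 and L^(k+1) = L P^k, so the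
   powers of L converge as well. *)

From Stdlib Require Import Reals Lra Lia Psatz Classical ClassicalEpsilon.
Open Scope R_scope.

Lemma rsum_ext n f g :
  (forall m, (m < n)%nat -> f m = g m) -> rsum n f = rsum n g.
Proof.
  induction n as [|n IH]; intros Hfg; simpl; [reflexivity|].
  rewrite IH, Hfg; [reflexivity|lia|intros; apply Hfg; lia].
Qed.

Lemma rsum_plus n f g : rsum n (fun m => f m + g m) = rsum n f + rsum n g.
Proof. induction n as [|n IH]; simpl; [lra|]. rewrite IH; ring. Qed.

Lemma rsum_minus n f g : rsum n (fun m => f m - g m) = rsum n f - rsum n g.
Proof. induction n as [|n IH]; simpl; [lra|]. rewrite IH; ring. Qed.

Lemma rsum_scal_l n c f : rsum n (fun m => c * f m) = c * rsum n f.
Proof. induction n as [|n IH]; simpl; [lra|]. rewrite IH; ring. Qed.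

Lemma rsum_scal_r n c f : rsum n (fun m => f m * c) = rsum n f * c.
Proof. induction n as [|n IH]; simpl; [lra|]. rewrite IH; ring. Qed.

Lemma rsum_const n c : rsum n (fun _ => c) = INR n * c.
Proof. induction n as [|n IH]; simpl rsum; [simpl; lra|]. rewrite IH, S_INR; ring. Qed.

Lemma rsum_le n f g :
  (forall m, (m < n)%nat -> f m <= g m) -> rsum n f <= rsum n g.
Proof.
  induction n as [|n IH]; intros Hfg; simpl; [lra|].
  apply Rplus_le_compat; [apply IH; intros; apply Hfg|apply Hfg]; lia.
Qed.

Lemma rsum_nonneg n f : (forall m, (m < n)%nat -> 0 <= f m) -> 0 <= rsum n f.
Proof.
  intros Hf. replace 0 with (rsum n (fun _ => 0)) by (rewrite rsum_const; ring).
  apply rsum_le; exact Hf.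
Qed.

Lemma rsum_abs n f : Rabs (rsum n f) <= rsum n (fun m => Rabs (f m)).
Proof.
  induction n as [|n IH]; simpl; [rewrite Rabs_R0; lra|].
  eapply Rle_trans; [apply Rabs_triang|lra].
Qed.

Lemma rsum_ge_term n f i :
  (forall m, (m < n)%nat -> 0 <= f m) -> (i < n)%nat -> f i <= rsum n f.
Proof.
  induction n as [|n IH]; intros Hf Hi; [lia|]. simpl.
  destruct (Nat.eq_dec i n) as [->|Hne].
  - assert (0 <= rsum n f) by (apply rsum_nonneg; intros; apply Hf; lia). lra.
  - assert (f i <= rsum n f) by (apply IH; [intros; apply Hf|]; lia).
    assert (0 <= f n) by (apply Hf; lia). lra.
Qed.

Lemma rsum_swap n m (f : nat -> nat -> R) :
  rsum n (fun a => rsum m (fun b => f a b)) = rsum m (fun b => rsum n (fun a => f a b)).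
Proof.
  induction n as [|n IH]; simpl; [rewrite rsum_const; simpl; ring|].
  rewrite IH, <- rsum_plus. reflexivity.
Qed.

Lemma rsum_delta n f i :
  (i < n)%nat -> rsum n (fun m => if Nat.eqb m i then f m else 0) = f i.
Proof.
  induction n as [|n IH]; intros Hi; [lia|]. simpl.
  destruct (Nat.eq_dec i n) as [->|Hne].
  - rewrite Nat.eqb_refl, (rsum_ext _ _ (fun _ => 0)), rsum_const; [ring|].
    intros m Hm. destruct (Nat.eqb_spec m n); [lia|reflexivity].
  - rewrite IH by lia. destruct (Nat.eqb_spec n i); [lia|ring].
Qed.

(** The refined bounds below quantify how much an average is pulled
    away from an extreme value by a single term of known weight; they drive
    both contraction arguments. *)

Lemma average_lower n w x lo i :
  (forall m, (m < n)%nat -> 0 <= w m) -> rsum n w = 1 ->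
  (forall m, (m < n)%nat -> 0 < w m -> lo <= x m) ->
  (i < n)%nat -> lo <= x i ->
  lo + w i * (x i - lo) <= rsum n (fun m => w m * x m).
Proof.
  intros Hw Hsum Hx Hi Hxi.
  assert (Hshift : rsum n (fun m => w m * x m) = lo + rsum n (fun m => w m * (x m - lo))).
  { rewrite (rsum_ext n (fun m => w m * (x m - lo)) (fun m => w m * x m - w m * lo))
      by (intros; ring).
    rewrite rsum_minus, rsum_scal_r, Hsum. ring. }
  rewrite Hshift. apply Rplus_le_compat_l.
  apply (rsum_ge_term n (fun m => w m * (x m - lo))); [|exact Hi].
  intros m Hm. destruct (Hw m Hm) as [Hpos|Hzero].
  - specialize (Hx m Hm Hpos). apply Rmult_le_pos; lra.
  - rewrite <- Hzero. lra.
Qed.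

Lemma average_upper n w x hi i :
  (forall m, (m < n)%nat -> 0 <= w m) -> rsum n w = 1 ->
  (forall m, (m < n)%nat -> 0 < w m -> x m <= hi) ->
  (i < n)%nat -> x i <= hi ->
  rsum n (fun m => w m * x m) <= hi - w i * (hi - x i).
Proof.
  intros Hw Hsum Hx Hi Hxi.
  assert (Hneg := average_lower n w (fun m => - x m) (- hi) i Hw Hsum). cbv beta in Hneg.
  rewrite (rsum_ext n (fun m => w m * - x m) (fun m => -1 * (w m * x m)))
    in Hneg by (intros; ring).
  rewrite rsum_scal_l in Hneg.
  assert (H : - hi + w i * (- x i - - hi) <= -1 * rsum n (fun m => w m * x m)).
  { apply Hneg; [intros m Hm Hpos; specialize (Hx m Hm Hpos); lra|exact Hi|lra]. }
  lra.
Qed.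

Lemma average_abs_diff n w x y :
  (forall m, (m < n)%nat -> 0 <= w m) ->
  Rabs (rsum n (fun m => w m * x m) - rsum n (fun m => w m * y m))
  <= rsum n (fun m => w m * Rabs (x m - y m)).
Proof.
  intros Hw. rewrite <- rsum_minus.
  eapply Rle_trans; [apply rsum_abs|]. apply rsum_le. intros m Hm.
  rewrite <- Rmult_minus_distr_l, Rabs_mult, (Rabs_right (w m)); [lra|].
  apply Rle_ge, Hw, Hm.
Qed.

Lemma mat_mul_assoc n A B C i j :
  mat_mul n (mat_mul n A B) C i j = mat_mul n A (mat_mul n B C) i j.
Proof.
  unfold mat_mul.
  transitivity (rsum n (fun m => rsum n (fun l => A i l * B l m * C m j))).
  - apply rsum_ext. intros. rewrite <- rsum_scal_r. reflexivity.
  - rewrite rsum_swap. apply rsum_ext. intros. rewrite <- rsum_scal_l.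
    apply rsum_ext. intros. ring.
Qed.

Lemma mat_mul_id_r n A i j : (j < n)%nat -> mat_mul n A mat_id i j = A i j.
Proof.
  intros Hj. unfold mat_mul, mat_id.
  rewrite <- (rsum_delta n (fun m => A i m) j Hj).
  apply rsum_ext. intros. destruct (Nat.eqb m j); ring.
Qed.

Lemma mat_mul_id_l n A i j : (i < n)%nat -> mat_mul n mat_id A i j = A i j.
Proof.
  intros Hi. unfold mat_mul, mat_id.
  rewrite <- (rsum_delta n (fun m => A m j) i Hi).
  apply rsum_ext. intros. rewrite Nat.eqb_sym. destruct (Nat.eqb m i); ring.
Qed.

Lemma mat_mul_ext_l n A A' B i j :
  (forall m, (m < n)%nat -> A i m = A' i m) -> mat_mul n A B i j = mat_mul n A' B i j.
Proof. intros H. apply rsum_ext. intros m Hm. rewrite H by exact Hm. reflexivity. Qed.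

Lemma mat_pow_add n A s k i j :
  (j < n)%nat -> mat_pow n A (s + k) i j = mat_mul n (mat_pow n A s) (mat_pow n A k) i j.
Proof.
  revert i j. induction k as [|k IH]; intros i j Hj.
  - rewrite Nat.add_0_r. simpl. rewrite mat_mul_id_r by exact Hj. reflexivity.
  - rewrite Nat.add_succ_r. simpl. rewrite <- mat_mul_assoc.
    apply mat_mul_ext_l. intros m Hm. apply IH, Hm.
Qed.

Lemma rowsum_mul n A B i :
  rsum n (fun l => mat_mul n A B i l) = rsum n (fun m => A i m * rsum n (fun l => B m l)).
Proof.
  unfold mat_mul. rewrite rsum_swap. apply rsum_ext. intros. rewrite rsum_scal_l. reflexivity.
Qed.

Lemma rowsum_id n i : (i < n)%nat -> rsum n (fun l => mat_id i l) = 1.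
Proof.
  intros Hi. unfold mat_id.
  transitivity (rsum n (fun m => if Nat.eqb m i then 1 else 0)).
  - apply rsum_ext. intros m _. rewrite Nat.eqb_sym. reflexivity.
  - exact (rsum_delta n (fun _ => 1) i Hi).
Qed.

Lemma cv_const c : Un_cv (fun _ => c) c.
Proof.
  intros eps Heps. exists 0%nat. intros. unfold Rdist.
  rewrite Rminus_diag, Rabs_R0. exact Heps.
Qed.

Lemma rsum_cv n (f : nat -> nat -> R) :
  (forall m, (m < n)%nat -> exists l, Un_cv (fun k => f k m) l) ->
  exists l, Un_cv (fun k => rsum n (f k)) l.
Proof.
  induction n as [|n IH]; intros Hf; [exists 0; simpl; apply cv_const|].
  destruct IH as [l1 H1]; [intros; apply Hf; lia|].
  destruct (Hf n ltac:(lia)) as [l2 H2].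
  exists (l1 + l2). apply CV_plus; assumption.
Qed.

Lemma anchored_cauchy_cv (u : nat -> R) :
  (forall eps, 0 < eps -> exists N, forall p, Rabs (u (p + N)%nat - u N) <= eps) ->
  exists l, Un_cv u l.
Proof.
  intros H.
  assert (Hc : Cauchy_crit u).
  { intros eps Heps. destruct (H (eps / 4)) as [N HN]; [lra|]. exists N.
    intros a b Ha Hb. unfold Rdist.
    replace a with ((a - N) + N)%nat by lia. replace b with ((b - N) + N)%nat by lia.
    assert (H1 : Rabs (u (a - N + N)%nat - u N) < eps / 2)
      by (eapply Rle_lt_trans; [apply HN|lra]).
    assert (H2 : Rabs (u (b - N + N)%nat - u N) < eps / 2)
      by (eapply Rle_lt_trans; [apply HN|lra]).
    apply Rabs_def2 in H1. apply Rabs_def2 in H2. apply Rabs_def1; lra. }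
  destruct (R_complete u Hc) as [l Hl]. exists l; exact Hl.
Qed.

Lemma cv_small_increments (u : nat -> R) l :
  Un_cv u l -> forall eta, 0 < eta ->
  exists K, forall k, (K <= k)%nat -> forall p, Rabs (u (p + k)%nat - u k) <= eta.
Proof.
  intros Hu eta Heta. destruct (Hu (eta / 2)) as [K HK]; [lra|].
  exists K. intros k Hk p.
  assert (H1 := HK (p + k)%nat ltac:(lia)). assert (H2 := HK k Hk).
  unfold Rdist in *. apply Rabs_def2 in H1. apply Rabs_def2 in H2. apply Rabs_le; lra.
Qed.

Lemma geometric_small q eps : 0 <= q < 1 -> 0 < eps -> exists N, q ^ N < eps.
Proof.
  intros Hq Heps. destruct (pow_lt_1_zero q ltac:(rewrite Rabs_right; lra) eps Heps) as [N HN].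
  exists N. assert (H := HN N (le_n N)). rewrite Rabs_right in H; [exact H|].
  apply Rle_ge, pow_le. lra.
Qed.

Lemma uniform_nat_bound n (Q : nat -> nat -> Prop) :
  (forall i K K', (K <= K')%nat -> Q i K -> Q i K') ->
  (forall i, (i < n)%nat -> exists K, Q i K) -> exists K, forall i, (i < n)%nat -> Q i K.
Proof.
  intros Hmono. induction n as [|n IH]; intros H; [exists 0%nat; intros; lia|].
  destruct IH as [K1 HK1]; [intros; apply H; lia|].
  destruct (H n ltac:(lia)) as [K2 HK2].
  exists (K1 + K2)%nat. intros i Hi. destruct (Nat.eq_dec i n) as [->|Hne].
  - apply (Hmono _ K2); [lia|exact HK2].
  - apply (Hmono _ K1); [lia|]. apply HK1. lia.
Qed.

Lemma uniform_pos_bound n (Q : nat -> R -> Prop) :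
  (forall i d d', 0 < d' -> d' <= d -> Q i d -> Q i d') ->
  (forall i, (i < n)%nat -> exists d, 0 < d /\ Q i d) ->
  exists d, 0 < d /\ forall i, (i < n)%nat -> Q i d.
Proof.
  intros Hmono. induction n as [|n IH]; intros H; [exists 1; split; [lra|intros; lia]|].
  destruct IH as [d1 [Hd1 HQ1]]; [intros; apply H; lia|].
  destruct (H n ltac:(lia)) as [d2 [Hd2 HQ2]].
  assert (Hmin : 0 < Rmin d1 d2) by (apply Rmin_pos; assumption).
  exists (Rmin d1 d2). split; [exact Hmin|]. intros i Hi.
  destruct (Nat.eq_dec i n) as [->|Hne].
  - apply (Hmono _ d2); [exact Hmin|apply Rmin_r|exact HQ2].
  - apply (Hmono _ d1); [exact Hmin|apply Rmin_l|]. apply HQ1. lia.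
Qed.

(** Number of indices below [n] satisfying a (classically decided) property;
    used as the measure of the induction over reachability sets. *)

Fixpoint count_below (n : nat) (p : nat -> Prop) : nat :=
  match n with
  | O => O
  | S m => (count_below m p + if excluded_middle_informative (p m) then 1 else 0)%nat
  end.

Lemma count_below_le n (p q : nat -> Prop) :
  (forall l, (l < n)%nat -> p l -> q l) -> (count_below n p <= count_below n q)%nat.
Proof.
  induction n as [|n IH]; intros Hpq; simpl; [lia|].
  assert (count_below n p <= count_below n q)%nat by (apply IH; intros; apply Hpq; auto).
  destruct (excluded_middle_informative (p n)) as [Hp|Hp]; [|lia].
  destruct (excluded_middle_informative (q n)) as [Hq|Hq]; [lia|].
  exfalso. apply Hq, Hpq; auto.
Qed.

Lemma count_below_lt n (p q : nat -> Prop) i :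
  (forall l, (l < n)%nat -> p l -> q l) -> (i < n)%nat -> q i -> ~ p i ->
  (count_below n p < count_below n q)%nat.
Proof.
  induction n as [|n IH]; intros Hpq Hi Hqi Hpi; [lia|]. simpl.
  assert (Hle : (count_below n p <= count_below n q)%nat)
    by (apply count_below_le; intros; apply Hpq; auto).
  destruct (Nat.eq_dec i n) as [->|Hne].
  - destruct (excluded_middle_informative (p n)); [contradiction|].
    destruct (excluded_middle_informative (q n)); [lia|contradiction].
  - assert (count_below n p < count_below n q)%nat
      by (apply IH; [intros; apply Hpq; auto|lia|exact Hqi|exact Hpi]).
    destruct (excluded_middle_informative (p n)) as [Hp|Hp]; [|lia].
    destruct (excluded_middle_informative (q n)) as [Hq|Hq]; [lia|].
    exfalso. apply Hq, Hpq; auto.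
Qed.

(** * Powers of a lazy stochastic matrix converge *)

Section LazyStochastic.

Variable n : nat.
Variable P : mat.
Hypothesis P_nonneg : forall i j, (i < n)%nat -> (j < n)%nat -> 0 <= P i j.
Hypothesis P_rowsum : forall i, (i < n)%nat -> rsum n (fun j => P i j) = 1.
Hypothesis P_diag_pos : forall i, (i < n)%nat -> 0 < P i i.

Local Notation W := (mat_pow n P).

Lemma W_nonneg k i j : (i < n)%nat -> (j < n)%nat -> 0 <= W k i j.
Proof.
  revert j. induction k as [|k IH]; intros j Hi Hj; simpl.
  - unfold mat_id. destruct (Nat.eqb i j); lra.
  - apply rsum_nonneg. intros m Hm. apply Rmult_le_pos; [apply IH|apply P_nonneg]; assumption.
Qed.

Lemma W_rowsum k i : (i < n)%nat -> rsum n (fun l => W k i l) = 1.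
Proof.
  intros Hi. induction k as [|k IH]; simpl; [apply rowsum_id, Hi|].
  rewrite rowsum_mul, (rsum_ext n _ (fun m => W k i m * 1)).
  - rewrite rsum_scal_r, Rmult_1_r. exact IH.
  - intros m Hm. rewrite P_rowsum by exact Hm. reflexivity.
Qed.

Lemma W_le_1 k i j : (i < n)%nat -> (j < n)%nat -> W k i j <= 1.
Proof.
  intros Hi Hj. rewrite <- (W_rowsum k i Hi).
  apply (rsum_ge_term n (fun l => W k i l)); [intros; apply W_nonneg|]; assumption.
Qed.

Lemma W_split s k i j :
  (j < n)%nat -> W (s + k) i j = rsum n (fun m => W s i m * W k m j).
Proof. apply mat_pow_add. Qed.

(* Laziness: a positive entry of some power stays positive in all later powers. *)
Lemma W_pos_persists s t i l :
  (i < n)%nat -> (l < n)%nat -> 0 < W s i l -> 0 < W (s + t) i l.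
Proof.
  intros Hi Hl Hpos. induction t as [|t IH]; [rewrite Nat.add_0_r; exact Hpos|].
  rewrite Nat.add_succ_r. simpl.
  eapply Rlt_le_trans; [|apply (rsum_ge_term n (fun m => W (s + t) i m * P m l) l)].
  - apply Rmult_lt_0_compat; [exact IH|apply P_diag_pos, Hl].
  - intros m Hm. apply Rmult_le_pos; [apply W_nonneg|apply P_nonneg]; assumption.
  - exact Hl.
Qed.

Definition reaches (i l : nat) : Prop := exists s, 0 < W s i l.

Lemma reaches_refl i : (i < n)%nat -> reaches i i.
Proof.
  intros Hi. exists 1%nat. simpl. rewrite mat_mul_id_l by exact Hi. apply P_diag_pos, Hi.
Qed.

Lemma reaches_trans i j l :
  (i < n)%nat -> (j < n)%nat -> (l < n)%nat -> reaches i j -> reaches j l -> reaches i l.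
Proof.
  intros Hi Hj Hl [s Hs] [t Ht]. exists (s + t)%nat. rewrite W_split by exact Hl.
  eapply Rlt_le_trans; [|apply (rsum_ge_term n (fun m => W s i m * W t m l) j)].
  - apply Rmult_lt_0_compat; assumption.
  - intros m Hm. apply Rmult_le_pos; apply W_nonneg; assumption.
  - exact Hj.
Qed.

Lemma reaches_support i a m s :
  (i < n)%nat -> (a < n)%nat -> (m < n)%nat -> reaches i a -> 0 < W s a m -> reaches i m.
Proof. intros Hi Ha Hm Hia Hpos. apply (reaches_trans i a m); [..|exists s]; assumption. Qed.

Lemma eventually_positive :
  exists M, forall a l, (a < n)%nat -> (l < n)%nat -> reaches a l -> 0 < W M a l.
Proof.
  destruct (uniform_nat_bound n
    (fun a K => (a < n)%nat -> forall l, (l < n)%nat -> reaches a l -> 0 < W K a l)) as [M HM].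
  - intros a K K' HK HQ Ha l Hl Hr. replace K' with (K + (K' - K))%nat by lia.
    apply W_pos_persists; auto.
  - intros a Ha.
    destruct (uniform_nat_bound n
      (fun l K => (l < n)%nat -> reaches a l -> 0 < W K a l)) as [K HK].
    + intros l K K' HK HQ Hl Hr. replace K' with (K + (K' - K))%nat by lia.
      apply W_pos_persists; auto.
    + intros l Hl. destruct (classic (reaches a l)) as [[s Hs]|Hnr].
      * exists s. intros. exact Hs.
      * exists 0%nat. intros _ Hr. contradiction.
    + exists K. intros _ l Hl Hr. apply HK; assumption.
  - exists M. intros a l Ha Hl Hr. apply HM; assumption.
Qed.

Lemma uniform_reach :
  exists M d, 0 < d /\ d <= 1 /\
    forall a l, (a < n)%nat -> (l < n)%nat -> reaches a l -> d <= W M a l.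
Proof.
  destruct eventually_positive as [M HM].
  destruct (uniform_pos_bound n
    (fun a d => (a < n)%nat -> forall l, (l < n)%nat -> reaches a l -> d <= W M a l))
    as [d [Hd HQ]].
  - intros a d d' _ Hdd' HQ Ha l Hl Hr. specialize (HQ Ha l Hl Hr). lra.
  - intros a Ha.
    destruct (uniform_pos_bound n
      (fun l d => (l < n)%nat -> reaches a l -> d <= W M a l)) as [d [Hd HQ]].
    + intros l d d' _ Hdd' HQ Hl Hr. specialize (HQ Hl Hr). lra.
    + intros l Hl. destruct (classic (reaches a l)) as [Hr|Hnr].
      * exists (W M a l). split; [apply HM|intros; lra]; assumption.
      * exists 1. split; [lra|]. intros _ Hr. contradiction.
    + exists d. split; [exact Hd|]. intros _ l Hl Hr. apply HQ; assumption.
  - exists M, (Rmin d 1). split; [apply Rmin_pos; lra|]. split; [apply Rmin_r|].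
    intros a l Ha Hl Hr. eapply Rle_trans; [apply Rmin_l|]. apply HQ; assumption.
Qed.

(** Closed classes: if every state reachable from [i] leads back to [i],
    the entries [(P^k)_aj] over the states [a] reachable from [i] lie in a
    band whose width shrinks by the factor [1 - d] every [M] steps, because
    each of these rows of [P^M] puts weight at least [d] on [i]. *)

Section ClosedClass.

Variables i j : nat.
Hypothesis Hi : (i < n)%nat.
Hypothesis Hj : (j < n)%nat.
Hypothesis closed : forall l, (l < n)%nat -> reaches i l -> reaches l i.

Definition band (k : nat) (lo e : R) : Prop :=
  forall a, (a < n)%nat -> reaches i a -> lo <= W k a j <= lo + e.

Lemma band_full k : band k 0 1.
Proof. intros a Ha _. split; [apply W_nonneg|rewrite Rplus_0_l; apply W_le_1]; assumption. Qed.

(* Later entries are averages of earlier ones over reachable states. *)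
Lemma band_shift p k lo e : band k lo e -> band (p + k) lo e.
Proof.
  intros Hb a Ha Hia. rewrite W_split by exact Hj.
  assert (Hsupp : forall m, (m < n)%nat -> 0 < W p a m -> lo <= W k m j <= lo + e)
    by (intros m Hm Hpos; apply Hb; [|apply (reaches_support i a m p)]; assumption).
  assert (Hw : forall m, (m < n)%nat -> 0 <= W p a m) by (intros; apply W_nonneg; assumption).
  destruct (Hb a Ha Hia) as [Hlo Hhi]. assert (Hwa := Hw a Ha). split.
  - eapply Rle_trans;
      [|apply (average_lower n (fun m => W p a m) (fun m => W k m j) lo a)];
      [nra|exact Hw|apply W_rowsum, Ha|apply Hsupp|exact Ha|exact Hlo].
  - eapply Rle_trans;
      [apply (average_upper n (fun m => W p a m) (fun m => W k m j) (lo + e) a)|];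
      [exact Hw|apply W_rowsum, Ha|apply Hsupp|exact Ha|exact Hhi|nra].
Qed.

Lemma band_contract M d k lo e :
  (forall a l, (a < n)%nat -> (l < n)%nat -> reaches a l -> d <= W M a l) -> 0 <= d ->
  band k lo e -> band (M + k) (lo + d * (W k i j - lo)) ((1 - d) * e).
Proof.
  intros Hu Hd Hb a Ha Hia. rewrite W_split by exact Hj.
  assert (Hsupp : forall m, (m < n)%nat -> 0 < W M a m -> lo <= W k m j <= lo + e)
    by (intros m Hm Hpos; apply Hb; [|apply (reaches_support i a m M)]; assumption).
  assert (Hw : forall m, (m < n)%nat -> 0 <= W M a m) by (intros; apply W_nonneg; assumption).
  destruct (Hb i Hi (reaches_refl i Hi)) as [Hlo Hhi].
  assert (Hwi : d <= W M a i) by (apply Hu, closed; assumption).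
  split.
  - eapply Rle_trans;
      [|apply (average_lower n (fun m => W M a m) (fun m => W k m j) lo i)];
      [nra|exact Hw|apply W_rowsum, Ha|apply Hsupp|exact Hi|exact Hlo].
  - eapply Rle_trans;
      [apply (average_upper n (fun m => W M a m) (fun m => W k m j) (lo + e) i)|];
      [exact Hw|apply W_rowsum, Ha|apply Hsupp|exact Hi|exact Hhi|nra].
Qed.

Lemma closed_class_converges : exists lim, Un_cv (fun k => W k i j) lim.
Proof.
  destruct uniform_reach as [M [d [Hd [Hd1 Hu]]]].
  assert (Hbands : forall t, exists lo, band (t * M) lo ((1 - d) ^ t)).
  { induction t as [|t [lo Hlo]]; [exists 0; apply band_full|].
    exists (lo + d * (W (t * M) i j - lo)).
    replace (S t * M)%nat with (M + t * M)%nat by lia.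
    apply band_contract; [exact Hu|lra|exact Hlo]. }
  apply anchored_cauchy_cv. intros eps Heps.
  destruct (geometric_small (1 - d) eps ltac:(lra) Heps) as [N HN].
  destruct (Hbands N) as [lo Hlo]. exists (N * M)%nat. intros p.
  destruct (band_shift p _ _ _ Hlo i Hi (reaches_refl i Hi)) as [H1 H2].
  destruct (Hlo i Hi (reaches_refl i Hi)) as [H3 H4].
  apply Rabs_le. lra.
Qed.

End ClosedClass.

(** Transient classes: if some [j1] reachable from [i] cannot lead back to
    [i], then every M steps at least [d] of the mass of each row [a] of the
    class of [i] moves to states outside the class, whose entries already
    converge.  The increments of [(P^k)_aj] then contract up to an error
    [eta] coming from those states. *)

Section TransientClass.

Variables i j j1 : nat.
Hypothesis Hi : (i < n)%nat.
Hypothesis Hj : (j < n)%nat.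
Hypothesis Hj1 : (j1 < n)%nat.
Hypothesis escape : reaches i j1.
Hypothesis no_return : ~ reaches j1 i.
Hypothesis lower_converges :
  forall l, (l < n)%nat -> reaches i l -> ~ reaches l i ->
    exists lim, Un_cv (fun k => W k l j) lim.

Definition settled (k : nat) (e : R) : Prop :=
  forall p a, (a < n)%nat -> reaches i a -> reaches a i ->
    Rabs (W (p + k) a j - W k a j) <= e.

Lemma settled_full k : settled k 1.
Proof.
  intros p a Ha _ _.
  assert (H1 := W_nonneg (p + k) a j Ha Hj). assert (H2 := W_le_1 (p + k) a j Ha Hj).
  assert (H3 := W_nonneg k a j Ha Hj). assert (H4 := W_le_1 k a j Ha Hj).
  apply Rabs_le. lra.
Qed.

Lemma settled_contract M d eta K k e :
  (forall a l, (a < n)%nat -> (l < n)%nat -> reaches a l -> d <= W M a l) -> 0 <= d ->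
  (forall l, (l < n)%nat -> reaches i l -> ~ reaches l i ->
     forall k', (K <= k')%nat -> forall p, Rabs (W (p + k') l j - W k' l j) <= eta) ->
  (K <= k)%nat -> 0 <= e -> settled k e -> settled (M + k) ((1 - d) * e + eta).
Proof.
  intros Hu Hd Htail Hk He Hs p a Ha Hia Hai.
  assert (Heta : 0 <= eta)
    by (eapply Rle_trans; [apply Rabs_pos|apply (Htail j1 Hj1 escape no_return k Hk p)]).
  replace (p + (M + k))%nat with (M + (p + k))%nat by lia.
  rewrite (W_split M (p + k) a j Hj), (W_split M k a j Hj).
  eapply Rle_trans; [apply average_abs_diff; intros; apply W_nonneg; assumption|].
  assert (Hsupp : forall m, (m < n)%nat -> 0 < W M a m ->
            Rabs (W (p + k) m j - W k m j) <= e + eta).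
  { intros m Hm Hpos. assert (Him := reaches_support i a m M Hi Ha Hm Hia Hpos).
    destruct (classic (reaches m i)) as [Hmi|Hmi].
    - assert (H := Hs p m Hm Him Hmi). lra.
    - assert (H := Htail m Hm Him Hmi k Hk p). lra. }
  assert (Hj1_small := Htail j1 Hj1 escape no_return k Hk p).
  assert (Hwj1 : d <= W M a j1) by (apply Hu; [..|apply (reaches_trans a i j1)]; assumption).
  eapply Rle_trans;
    [apply (average_upper n (fun m => W M a m)
              (fun m => Rabs (W (p + k) m j - W k m j)) (e + eta) j1)|];
    [intros; apply W_nonneg; assumption|apply W_rowsum, Ha|exact Hsupp|exact Hj1|lra|].
  nra.
Qed.

Lemma transient_class_converges : exists lim, Un_cv (fun k => W k i j) lim.
Proof.
  destruct uniform_reach as [M [d [Hd [Hd1 Hu]]]].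
  apply anchored_cauchy_cv. intros eps Heps.
  set (eta := eps * d / 2).
  assert (Heta : 0 < eta) by (unfold eta; apply Rmult_lt_0_compat; [nra|lra]).
  destruct (uniform_nat_bound n (fun l K => (l < n)%nat -> reaches i l -> ~ reaches l i ->
      forall k, (K <= k)%nat -> forall p, Rabs (W (p + k) l j - W k l j) <= eta)) as [K HK].
  - intros l K K' HKK' HQ Hl Hr Hnr k Hk p. apply HQ; [..|lia]; assumption.
  - intros l Hl. destruct (classic (reaches i l /\ ~ reaches l i)) as [[Hr Hnr]|Hno].
    + destruct (lower_converges l Hl Hr Hnr) as [lim Hlim].
      destruct (cv_small_increments _ _ Hlim eta Heta) as [K HK].
      exists K. intros _ _ _. exact HK.
    + exists 0%nat. intros _ Hr Hnr. exfalso. tauto.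
  - assert (Hsettled : forall t, settled (t * M + K) ((1 - d) ^ t + eta / d)).
    { assert (Heta_d : 0 <= eta / d) by (apply Rlt_le, Rdiv_lt_0_compat; assumption).
      induction t as [|t IH].
      - intros p a Ha Hia Hai. eapply Rle_trans; [apply settled_full; assumption|].
        simpl. lra.
      - replace (S t * M + K)%nat with (M + (t * M + K))%nat by lia.
        replace ((1 - d) ^ S t + eta / d) with ((1 - d) * ((1 - d) ^ t + eta / d) + eta)
          by (simpl; field; lra).
        assert (0 <= (1 - d) ^ t) by (apply pow_le; lra).
        apply (settled_contract M d eta K); [exact Hu|lra|intros; apply HK; assumption|lia|lra|exact IH]. }
    destruct (geometric_small (1 - d) (eps / 2) ltac:(lra) ltac:(lra)) as [N HN].
    exists (N * M + K)%nat. intros p.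
    eapply Rle_trans; [apply (Hsettled N p i Hi); apply reaches_refl, Hi|].
    assert (eta / d = eps / 2) by (unfold eta; field; lra). lra.
Qed.

End TransientClass.

(** Induction on the number of states reachable from [i]: states reachable
    from [i] that cannot return have strictly fewer reachable states. *)

Definition reach_count (i : nat) : nat := count_below n (reaches i).

Lemma reach_count_decreases i l :
  (i < n)%nat -> (l < n)%nat -> reaches i l -> ~ reaches l i ->
  (reach_count l < reach_count i)%nat.
Proof.
  intros Hi Hl Hil Hli. apply (count_below_lt n _ _ i); [|exact Hi|apply reaches_refl, Hi|exact Hli].
  intros m Hm Hlm. apply (reaches_trans i l m); assumption.
Qed.

Theorem lazy_stochastic_semiconvergent : semiconvergent n P.
Proof.
  intros i j Hi Hj.
  assert (H : forall N i, (i < n)%nat -> (reach_count i < N)%nat ->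
                exists lim, Un_cv (fun k => W k i j) lim).
  { induction N as [|N IH]; intros i' Hi' Hcount; [lia|].
    destruct (classic (exists j1, (j1 < n)%nat /\ reaches i' j1 /\ ~ reaches j1 i'))
      as [[j1 (Hj1 & Hesc & Hnr)]|Hclosed].
    - apply (transient_class_converges i' j j1); try assumption.
      intros l Hl Hr Hnr'. apply IH; [exact Hl|].
      assert (H := reach_count_decreases i' l Hi' Hl Hr Hnr'). lia.
    - apply closed_class_converges; try assumption.
      intros l Hl Hr. apply NNPP. intros Hnr. apply Hclosed. exists l. auto. }
  exact (H (S (reach_count i)) i Hi (Nat.lt_succ_diag_r _)).
Qed.

End LazyStochastic.

Lemma mul_pow_converges n A B i j :
  semiconvergent n B -> (j < n)%nat ->
  exists lim, Un_cv (fun k => mat_mul n A (mat_pow n B k) i j) lim.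
Proof.
  intros HB Hj. apply (rsum_cv n (fun k m => A i m * mat_pow n B k m j)).
  intros m Hm. destruct (HB m j Hm Hj) as [l Hl].
  exists (A i m * l). apply CV_mult; [apply cv_const|exact Hl].
Qed.

Lemma mul_add_J_zero_rowsum n A B i j :
  rsum n (fun m => A i m) = 0 ->
  mat_mul n A (mat_add B (Jmat n)) i j = mat_mul n A B i j.
Proof.
  intros Hrow. unfold mat_mul, mat_add, Jmat.
  rewrite (rsum_ext n _ (fun m => A i m * B m j + A i m * / INR n)) by (intros; ring).
  rewrite rsum_plus, rsum_scal_r. change (rsum n (A i)) with (rsum n (fun m => A i m)).
  rewrite Hrow. ring.
Qed.

Lemma zero_sum_diag_nonneg n f i :
  rsum n f = 0 -> (forall j, (j < n)%nat -> j <> i -> f j <= 0) -> (i < n)%nat -> 0 <= f i.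
Proof.
  intros Hsum Hoff Hi. rewrite <- Hsum, <- (rsum_delta n f i Hi).
  apply rsum_le. intros m Hm. destruct (Nat.eqb_spec m i); [lra|apply Hoff; assumption].
Qed.

Lemma inv_order_pos n i : (i < n)%nat -> 0 < / INR n.
Proof. intros Hi. apply Rinv_0_lt_compat, lt_0_INR. lia. Qed.

(** * Standardized Laplacians *)

Section Laplacian.

Variable n : nat.
Variable L : mat.
Hypothesis HL : standardized_laplacian n L.

Local Notation P := (mat_add L (Jmat n)).

Lemma laplacian_diag_nonneg i : (i < n)%nat -> 0 <= L i i.
Proof.
  intros Hi. destruct HL as [Hrow Hoff].
  apply (zero_sum_diag_nonneg n (fun j => L i j)); [apply Hrow, Hi| |exact Hi].
  intros j Hj Hji. apply Hoff; auto.
Qed.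

Lemma shifted_nonneg i j : (i < n)%nat -> (j < n)%nat -> 0 <= P i j.
Proof.
  intros Hi Hj. unfold mat_add, Jmat. destruct (Nat.eq_dec i j) as [<-|Hij].
  - assert (H1 := laplacian_diag_nonneg i Hi). assert (H2 := inv_order_pos n i Hi). lra.
  - destruct (proj2 HL i j Hi Hj Hij) as [Hle Habs].
    rewrite Rabs_left1 in Habs by exact Hle. lra.
Qed.

Lemma shifted_rowsum i : (i < n)%nat -> rsum n (fun j => P i j) = 1.
Proof.
  intros Hi. unfold mat_add, Jmat.
  rewrite (rsum_plus n (fun j => L i j) (fun _ => / INR n)), (proj1 HL i Hi), rsum_const.
  field.
  apply not_0_INR. lia.
Qed.

Lemma shifted_diag_pos i : (i < n)%nat -> 0 < P i i.
Proof.
  intros Hi. unfold mat_add, Jmat.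
  assert (H1 := laplacian_diag_nonneg i Hi). assert (H2 := inv_order_pos n i Hi). lra.
Qed.

Lemma laplacian_pow_rowsum k i :
  (i < n)%nat -> rsum n (fun l => mat_pow n L (S k) i l) = 0.
Proof.
  intros Hi. simpl. rewrite rowsum_mul, (rsum_ext n _ (fun _ => 0)).
  - rewrite rsum_const. ring.
  - intros m Hm. rewrite (proj1 HL m Hm). ring.
Qed.

(* Since [L^(k+1) J = 0], multiplying by [L] or by [P] agrees on the left. *)
Lemma laplacian_pow_succ k i j :
  (i < n)%nat -> (j < n)%nat -> mat_pow n L (S k) i j = mat_mul n L (mat_pow n P k) i j.
Proof.
  revert i j. induction k as [|k IH]; intros i j Hi Hj.
  - change (mat_mul n mat_id L i j = mat_mul n L mat_id i j).
    rewrite mat_mul_id_l, mat_mul_id_r by assumption. reflexivity.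
  - change (mat_mul n (mat_pow n L (S k)) L i j = mat_mul n L (mat_mul n (mat_pow n P k) P) i j).
    rewrite <- mul_add_J_zero_rowsum by (apply laplacian_pow_rowsum, Hi).
    rewrite (mat_mul_ext_l n _ (mat_mul n L (mat_pow n P k))) by (intros; apply IH; assumption).
    apply mat_mul_assoc.
Qed.

End Laplacian.

Theorem theorem6 (n : nat) (L : mat) :
  standardized_laplacian n L ->
  semiconvergent n L /\ semiconvergent n (mat_add L (Jmat n)).
Proof.
  intros HL.
  assert (HP : semiconvergent n (mat_add L (Jmat n))).
  { apply lazy_stochastic_semiconvergent.
    - apply shifted_nonneg, HL.
    - apply shifted_rowsum, HL.
    - apply shifted_diag_pos, HL. }
  split; [|exact HP].
  intros i j Hi Hj.
  destruct (mul_pow_converges n L (mat_add L (Jmat n)) i j HP Hj) as [lim Hlim].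
  exists lim. apply (CV_shift _ 1). eapply Un_cv_ext; [|exact Hlim].
  intros k. rewrite Nat.add_1_r. symmetry. apply laplacian_pow_succ; assumption.
Qed.
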